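(* Let $X,Y,Z,W$ be real-valued random variables on an atomless probability space (no integrability assumed). If $X\le_{\rm cx}Z$ and $Y\le_{\rm cx}W$, then $$X+Y\le_{\rm cx} Z^{\rm co}+W^{\rm co},$$ where $(Z^{\rm co},W^{\rm co})$ is a comonotonic version of $(Z,W)$.
   Context: An expectation $\mathbb E[V]$ is well-defined if $\mathbb E[\max\{V,0\}]<\infty$ or $\mathbb E[\max\{-V,0\}]<\infty$. We write $U\le_{\rm cx}V$ if $\mathbb E[u(U)]\le\mathbb E[u(V)]$ for all convex $u:\mathbb R\to\mathbb R$ such that both expectations are well-defined. A pair $(Z',W')$ is comonotonic if $Z'=f(S)$, $W'=g(S)$ a.s. for some random variable $S$ and increasing functions $f,g$; a comonotonic version of $(Z,W)$ is a comonotonic pair $(Z',W')$ with $Z'$ distributed as $Z$ and $W'$ distributed as $W$. *)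

From HB Require Import structures.
From mathcomp Require Import all_boot all_order all_algebra.
From mathcomp Require Import all_classical all_reals all_analysis.
Set Implicit Arguments. Unset Strict Implicit. Unset Printing Implicit Defensive.
Import Order.TTheory GRing.Theory Num.Theory.
Local Open Scope classical_set_scope.
Local Open Scope ring_scope.

Section defs.
Context (d : measure_display) (T : measurableType d) (R : realType)
  (P : probability T R).

Definition atomless :=
  forall A : set T, measurable A -> (0 < P A)%E ->
    exists2 B : set T, measurable B /\ B `<=` A & (0 < P B)%E /\ (P B < P A)%E.

Definition expectation_welldef (V : T -> R) :=
  (\int[P]_x (Num.max (V x) 0)%:E < +oo)%E \/
  (\int[P]_x (Num.max (- V x) 0)%:E < +oo)%E.

Definition cx_le (U V : T -> R) :=
  forall u : R -> R, convex_function (E := R^o) setT u ->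
    expectation_welldef (u \o U) -> expectation_welldef (u \o V) ->
    (\int[P]_x (u (U x))%:E <= \int[P]_x (u (V x))%:E)%E.

Definition same_law (U V : T -> R) :=
  forall B : set R, measurable B -> P (U @^-1` B) = P (V @^-1` B).

Definition comonotonic (Z' W' : T -> R) :=
  exists S : T -> R, exists f g : R -> R,
    [/\ measurable_fun setT S,
        {homo f : x y / x <= y}, {homo g : x y / x <= y},
        {ae P, forall w, Z' w = f (S w)} &
        {ae P, forall w, W' w = g (S w)}].

Definition comonotonic_version (Z' W' Z W : T -> R) :=
  [/\ comonotonic Z' W', same_law Z' Z & same_law W' W].

End defs.

From HB Require Import structures.
From mathcomp Require Import all_boot all_order all_algebra.
From mathcomp Require Import all_classical all_reals all_analysis.
From mathcomp Require Import ring lra.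
From mathcomp Require Import measurable_realfun.
Set Implicit Arguments. Unset Strict Implicit. Unset Printing Implicit Defensive.
Import Order.TTheory GRing.Theory Num.Theory.
Local Open Scope classical_set_scope.
Local Open Scope ring_scope.

(* Approximate the convex test function [u] from below by max-affine functions
   (maxima of finitely many tangents of [u] and of a constant floor [c]); by
   monotone convergence it suffices to compare the expectations of such a
   function [phi] at [X + Y] and at [Zco + Wco].  Along a comonotone curve
   [s |-> (f s, g s)] a max-affine [phi] splits as
   [phi (x + y) <= phi1 x + phi2 y] with [phi1], [phi2] convex and max-affine,
   with equality on the curve (add the lines one at a time, in increasing order
   of slope).  Hence
   [E phi(X + Y) <= E phi1(X) + E phi2(Y) <= E phi1(Z) + E phi2(W) = E phi(Zco + Wco)].
   Finally the floor [c] is sent to [-oo]; this only needs [E u(Zco + Wco)] to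
   be well defined. *)

Section convex_slopes.
Context (R : realType) (u : R -> R).
Hypothesis u_cvx : convex_function (E := R^o) setT u.

Lemma convexR_le x y l : 0 <= l -> l <= 1 ->
  u (l * x + (1 - l) * y) <= l * u x + (1 - l) * u y.
Proof.
by move=> l0 l1; have := u_cvx (Itv01 l0 l1) (x := x) (y := y); rewrite !inE => /(_ I I).
Qed.

Lemma convex_chord p q r : p < q -> q < r ->
  u q * (r - p) <= u p * (r - q) + u r * (q - p).
Proof.
move=> pq qr; have rp : 0 < r - p by rewrite subr_gt0 (lt_trans pq qr).
have rp0 : r - p != 0 by rewrite gt_eqF.
set l := (r - q) / (r - p).
have l0 : 0 <= l by rewrite divr_ge0 ?ltW // subr_gt0.
have l1 : l <= 1 by rewrite ler_pdivrMr // mul1r lerD2l lerN2 ltW.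
have lq : l * p + (1 - l) * r = q by rewrite /l; field.
have lu : (l * u p + (1 - l) * u r) * (r - p) = u p * (r - q) + u r * (q - p).
  by rewrite /l; field.
by have := convexR_le p r l0 l1; rewrite -(ler_pM2r rp) lq lu.
Qed.

Definition slope p q := (u q - u p) / (q - p).

Lemma slope_le_pq_qr p q r : p < q -> q < r -> slope p q <= slope q r.
Proof.
move=> pq qr; have := convex_chord pq qr; rewrite /slope.
have qp : 0 < q - p by rewrite subr_gt0.
have rq : 0 < r - q by rewrite subr_gt0.
rewrite ler_pdivrMr // mulrAC ler_pdivlMr //; nra.
Qed.

Lemma slope_le_pr_qr p q r : p < q -> q < r -> slope p r <= slope q r.
Proof.
move=> pq qr; have := convex_chord pq qr; rewrite /slope.
have rp : 0 < r - p by rewrite subr_gt0 (lt_trans pq qr).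
have rq : 0 < r - q by rewrite subr_gt0.
rewrite ler_pdivrMr // mulrAC ler_pdivlMr //; nra.
Qed.

Definition left_slopes k := [set slope p k | p in [set p | p < k]].

Definition lderiv k := sup (left_slopes k).

Lemma left_slopes_ub k r : k < r -> ubound (left_slopes k) (slope k r).
Proof. by move=> kr _ [p pk <-]; exact: slope_le_pq_qr. Qed.

Lemma has_sup_left_slopes k : has_sup (left_slopes k).
Proof.
split; first by exists (slope (k - 1) k), (k - 1); rewrite //= gtrBl.
by exists (slope k (k + 1)); apply: left_slopes_ub; rewrite ltrDl.
Qed.

Lemma slope_le_lderiv p k : p < k -> slope p k <= lderiv k.
Proof.
by move=> pk; apply: sup_upper_bound; [exact: has_sup_left_slopes|exists p].
Qed.

Lemma lderiv_le_slope k r : k < r -> lderiv k <= slope k r.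
Proof. by move=> kr; apply: ge_sup; [case: (has_sup_left_slopes k)|exact: left_slopes_ub]. Qed.

Lemma tangent_le k t : u k + lderiv k * (t - k) <= u t.
Proof.
have [tk|kt|->] := ltgtP t k; last by rewrite subrr mulr0 addr0.
- have := slope_le_lderiv tk; rewrite /slope ler_pdivrMr ?subr_gt0 //; nra.
- have := lderiv_le_slope kt; rewrite /slope ler_pdivlMr ?subr_gt0 //; nra.
Qed.

(* [slope (t + 1) (t + 2)] bounds [lderiv] on [t, t + 1]. *)
Lemma tangent_near t q : t < q -> q <= t + 1 ->
  u t - (slope (t + 1) (t + 2) - lderiv t) * (q - t) <= u q + lderiv q * (t - q).
Proof.
move=> tq qt1; have := tangent_le t q.
have : lderiv q <= slope (t + 1) (t + 2).
  have q2 : q < t + 2 by rewrite (le_lt_trans qt1) // ltrD2l ltr1n.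
  apply: le_trans (lderiv_le_slope q2) _.
  have [->//|qt1'] : q = t + 1 \/ q < t + 1 by apply/predU1P; rewrite -le_eqVlt.
  by apply: slope_le_pr_qr; rewrite // ltrD2l ltr1n.
nra.
Qed.

End convex_slopes.

Lemma convex_function_subr (R : realType) (u : R -> R) (m : R) :
  convex_function (E := R^o) setT u -> convex_function (E := R^o) setT (fun x => u x - m).
Proof.
move=> u_cvx t x y xT yT; have := u_cvx t x y xT yT.
rewrite /= !convRE /=; set a := t%:inum.
have -> : unstable.onem a = 1 - a by []; lra.
Qed.

Section max_affine.
Context (R : realType).
Implicit Types (L M : seq (R * R)) (D : seq (R * R * R)).

Definition line (l : R * R) (t : R) := l.1 * t + l.2.

(* The seed [head L] is itself a line of [L] unless [L] is empty. *)
Definition maxaff L t := \big[Num.max/line (head (0, 0) L) t]_(l <- L) line l t.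

Lemma maxaff_ge L t l : l \in L -> line l t <= maxaff L t.
Proof. by move=> lL; exact: (le_bigmax_seq _ _ _ _ lL). Qed.

Lemma maxaff_le L t B : L != [::] -> (forall l, l \in L -> line l t <= B) ->
  maxaff L t <= B.
Proof.
case: L => // l0 L _ LB; rewrite /maxaff big_seq.
by apply: bigmax_le => [|l]; [apply: LB; rewrite mem_head|exact: LB].
Qed.

Lemma maxaff_eq_mem L M : L != [::] -> L =i M -> maxaff L =1 maxaff M.
Proof.
move=> L0 LM t; have M0 : M != [::].
  by case: L L0 LM => // l L _ /(_ l); rewrite mem_head; case: M.
by apply/le_anti; rewrite !maxaff_le // => l lL; apply: maxaff_ge; rewrite ?LM // -LM.
Qed.

Lemma maxaff_cons l L t : L != [::] ->
  maxaff (l :: L) t = Num.max (line l t) (maxaff L t).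
Proof.
move=> L0; apply/le_anti/andP; split.
  apply: maxaff_le => // l'; rewrite inE => /predU1P [->|l'L].
    by rewrite le_max lexx.
  by rewrite le_max maxaff_ge ?orbT.
rewrite ge_max maxaff_ge ?mem_head //=; apply: maxaff_le => // l' l'L.
by apply: maxaff_ge; rewrite inE l'L orbT.
Qed.

Lemma maxaff_subr_antitone M a x x' : M != [::] -> (forall l, l \in M -> l.1 <= a) ->
  x <= x' -> maxaff M x' - a * x' <= maxaff M x - a * x.
Proof.
move=> M0 Ma xx'; suff : maxaff M x' <= maxaff M x + a * (x' - x) by lra.
apply: maxaff_le => // l lM; have := maxaff_ge x lM.
have : l.1 * (x' - x) <= a * (x' - x) by rewrite ler_wpM2r ?subr_ge0 ?Ma.
rewrite /line; lra.
Qed.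

Lemma maxaff_convex L : L != [::] -> convex_function (E := R^o) setT (maxaff L).
Proof.
move=> L0 t x y _ _; rewrite /= convRE.
apply: maxaff_le => // l lL; have := maxaff_ge x lL; have := maxaff_ge y lL.
have t0 : 0 <= t%:inum by []; have t1 : t%:inum <= 1 by [].
rewrite /line /=; set a := t%:inum in t0 t1 *.
have -> : conv t x y = a * x + (1 - a) * y :> R by [].
have -> : unstable.onem a = 1 - a by []; nra.
Qed.

Lemma maxaff_measurable L : measurable_fun setT (maxaff L).
Proof.
have line_mf l : measurable_fun setT (line l).
  by apply: measurable_funD; [exact: measurable_funM|exact: measurable_cst].
elim: L => [|l L IH].
  by move: (line_mf (0, 0)); apply: eq_measurable_fun => t _; rewrite /maxaff big_nil.
have [->|L0] := eqVneq L [::].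
  by move: (line_mf l); apply: eq_measurable_fun => t _; rewrite /maxaff big_cons big_nil maxxx.
move: (measurable_maxr (line_mf l) IH); apply: eq_measurable_fun => t _.
by rewrite maxaff_cons.
Qed.

Lemma max_slope_line L : L != [::] ->
  exists2 lm, lm \in L & forall l, l \in L -> l.1 <= lm.1.
Proof.
elim: L => // l L IH _; have [->|/IH [lm lmL Llm]] := eqVneq L [::].
  by exists l; rewrite ?mem_head // => l'; rewrite inE => /eqP ->.
have [llm|lml] := leP l.1 lm.1.
  by exists lm => [|l']; rewrite ?inE ?lmL ?orbT // => /predU1P [->|/Llm].
exists l => [|l']; rewrite ?mem_head // inE => /predU1P [->//|/Llm/le_trans].
by apply; exact: ltW.
Qed.

Definition line_sum (e : R * R * R) := (e.1.1, e.1.2 + e.2).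
Definition line_fst (e : R * R * R) := e.1.
Definition line_snd (e : R * R * R) := (e.1.1, e.2).

Lemma maxaff_sum_le D x y : D != [::] ->
  maxaff (map line_sum D) (x + y) <= maxaff (map line_fst D) x + maxaff (map line_snd D) y.
Proof.
move=> D0; apply: maxaff_le; first by case: D D0.
move=> _ /mapP [e eD ->].
have := maxaff_ge x (map_f line_fst eD); have := maxaff_ge y (map_f line_snd eD).
rewrite /line /=; lra.
Qed.

End max_affine.

Arguments line {R}.
Arguments maxaff {R}.
Arguments line_sum {R}.
Arguments line_fst {R}.
Arguments line_snd {R}.

Lemma exists_between (disp : Order.disp_t) (I : orderType disp) (R : realType)
    (p q : I -> R) :
  {homo p : i j /~ (i <= j)%O} -> {homo q : i j / (i <= j)%O} ->
  exists beta, forall i, Num.min (p i) (q i) <= beta <= Num.max (p i) (q i).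
Proof.
move=> p_anti q_mono.
have min_le_max i j : Num.min (p i) (q i) <= Num.max (p j) (q j).
  have [ij|ji] := leP i j.
    by rewrite ge_min !le_max (q_mono _ _ ij) !orbT.
  by rewrite ge_min !le_max (p_anti _ _ (ltW ji)).
have [[i0 _]|/forallNP noI] := pselect (exists i : I, True); last first.
  by exists 0 => i; have := noI i.
set S := [set Num.min (p i) (q i) | i in setT].
have supS : has_sup S.
  by split; [exists (Num.min (p i0) (q i0)), i0|exists (Num.max (p i0) (q i0)) => _ [i _ <-]].
exists (sup S) => i; apply/andP; split; first by apply: sup_upper_bound => //; exists i.
by apply: ge_sup; [case: supS|move=> _ [j _ <-]].
Qed.

Lemma max_add_between (R : realType) (y1 y2 z1 z2 b beta : R) :
  Num.min (z1 - y1) (b - (z2 - y2)) <= beta <= Num.max (z1 - y1) (b - (z2 - y2)) ->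
  Num.max (y1 + beta) z1 + Num.max (y2 + (b - beta)) z2 =
  Num.max (y1 + y2 + b) (z1 + z2).
Proof.
have [h|h] : z1 - y1 <= b - (z2 - y2) \/ b - (z2 - y2) <= z1 - y1.
  by apply/orP; exact: le_total.
  rewrite (min_l h) (max_r h) => /andP[lo hi].
  have [e1 e2 e3] : [/\ z1 <= y1 + beta, z2 <= y2 + (b - beta) & z1 + z2 <= y1 + y2 + b].
    by split; lra.
  by rewrite (max_l e1) (max_l e2) (max_l e3); lra.
rewrite (min_r h) (max_l h) => /andP[lo hi].
have [e1 e2 e3] : [/\ y1 + beta <= z1, y2 + (b - beta) <= z2 & y1 + y2 + b <= z1 + z2].
  by split; lra.
by rewrite (max_r e1) (max_r e2) (max_r e3).
Qed.

Section comonotone_split.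
Context (R : realType) (f g : R -> R).
Hypotheses (f_mono : {homo f : x y / x <= y}) (g_mono : {homo g : x y / x <= y}).
Implicit Types (L : seq (R * R)) (D : seq (R * R * R)).

Definition comonotone_split D L :=
  [/\ D != [::], map line_sum D =i L &
    forall s, maxaff (map line_fst D) (f s) + maxaff (map line_snd D) (g s) =
              maxaff L (f s + g s)].

Lemma comonotone_split1 l : comonotone_split [:: (l.1, l.2, 0)] [:: l].
Proof.
split=> // [x|s]; first by rewrite /line_sum /= addr0 -surjective_pairing.
by rewrite /maxaff !big_cons !big_nil !maxxx /line /=; lra.
Qed.

Lemma comonotone_split_neq0 D L : comonotone_split D L -> L != [::].
Proof.
case: D => [[]//|e D [_ DL _]].
by have := DL (line_sum e); rewrite mem_head; case: L {DL}.
Qed.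

Lemma comonotone_split_eq_mem D L L' :
  L =i L' -> comonotone_split D L -> comonotone_split D L'.
Proof.
move=> LL' DL_split; have L0 := comonotone_split_neq0 DL_split.
case: DL_split => D0 DL DLs.
split=> // [x|s]; first by rewrite DL LL'.
by rewrite DLs (maxaff_eq_mem L0 LL').
Qed.

(* The intercept [b] of a line of maximal slope is split as [beta + (b - beta)], with
   [beta] chosen so that on the comonotone curve the new line is active in both
   summands or in neither. *)
Lemma comonotone_split_cons D L a b : comonotone_split D L ->
  (forall l, l \in L -> l.1 <= a) ->
  exists beta, comonotone_split ((a, beta, b - beta) :: D) ((a, b) :: L).
Proof.
move=> DL_split La; have L0 := comonotone_split_neq0 DL_split.
case: DL_split => D0 DL DLs.
have D1_0 : map line_fst D != [::] by rewrite -size_eq0 size_map size_eq0.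
have D2_0 : map line_snd D != [::] by rewrite -size_eq0 size_map size_eq0.
have Da e : e \in D -> e.1.1 <= a by move=> eD; apply: (La (line_sum e)); rewrite -DL map_f.
have D1a l : l \in map line_fst D -> l.1 <= a by move=> /mapP [e /Da ? ->].
have D2a l : l \in map line_snd D -> l.1 <= a by move=> /mapP [e /Da ? ->].
pose p s := maxaff (map line_fst D) (f s) - a * f s.
pose q s := b - (maxaff (map line_snd D) (g s) - a * g s).
have p_anti : {homo p : s t /~ s <= t}.
  by move=> s t st; apply: maxaff_subr_antitone => //; exact: f_mono.
have q_mono : {homo q : s t / s <= t}.
  by move=> s t st; rewrite lerD2l lerN2; apply: maxaff_subr_antitone => //; exact: g_mono.
have [beta between] := exists_between p_anti q_mono.
exists beta; split=> // [x|s].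
  by rewrite /= !inE DL /line_sum /= [beta + _]addrC subrK.
rewrite !map_cons !maxaff_cons //.
by rewrite -DLs /line /= mulrDr; apply: max_add_between; exact: between.
Qed.

Lemma exists_comonotone_split L : L != [::] -> exists D, comonotone_split D L.
Proof.
elim: {L}(size L) {-2}L (erefl (size L)) => [|n IHn] L sL L0; first by case: L sL L0.
have [lm lmL Llm] := max_slope_line L0.
have LlmL' : lm :: rem lm L =i L by apply/perm_mem; rewrite perm_sym perm_to_rem.
have [L'0|L'0] := eqVneq (rem lm L) [::].
  exists [:: (lm.1, lm.2, 0)]; apply: comonotone_split_eq_mem LlmL' _.
  by rewrite L'0; exact: comonotone_split1.
have sL' : size (rem lm L) = n by rewrite size_rem // sL.
have [D' D'L'] := IHn _ sL' L'0.
have L'lm l : l \in rem lm L -> l.1 <= lm.1 by move=> /mem_rem /Llm.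
have [beta split] := comonotone_split_cons lm.2 D'L' L'lm.
exists ((lm.1, beta, lm.2 - beta) :: D'); apply: comonotone_split_eq_mem split.
by rewrite -surjective_pairing.
Qed.

End comonotone_split.

Section tangent_approximation.
Context (R : realType) (u : R -> R).
Hypothesis u_cvx : convex_function (E := R^o) setT u.

Definition tangent k : R * R := (lderiv u k, u k - lderiv u k * k).

Lemma line_tangent_le k t : line (tangent k) t <= u t.
Proof. by have := tangent_le u_cvx k t; rewrite /line /=; lra. Qed.

Definition rat_points n : seq R := map ratr (pmap (@unpickle rat) (iota 0 n)).

Definition tangent_approx l0 n := l0 :: map tangent (rat_points n).

Lemma rat_points_sub n m : (n <= m)%N -> {subset rat_points n <= rat_points m}.
Proof.
move=> nm x /mapP [q]; rewrite mem_pmap => /mapP [i]; rewrite mem_iota /= => ni qi ->.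
apply: map_f; rewrite mem_pmap; apply/mapP; exists i => //.
by rewrite mem_iota /= (leq_trans ni).
Qed.

Lemma tangent_approx_le l0 n t :
  maxaff (tangent_approx l0 n) t <= Num.max (line l0 t) (u t).
Proof.
apply: maxaff_le => // l; rewrite inE => /predU1P [->|/mapP [k _ ->]].
  by rewrite le_max lexx.
by rewrite le_max line_tangent_le orbT.
Qed.

Lemma tangent_approx_homo l0 t :
  {homo (fun n => maxaff (tangent_approx l0 n) t) : n m / (n <= m)%N >-> n <= m}.
Proof.
move=> n m nm; apply: maxaff_le => // l; rewrite inE => /predU1P [->|/mapP [k kn ->]].
  by apply: maxaff_ge; rewrite mem_head.
by apply: maxaff_ge; rewrite inE map_f ?orbT // (rat_points_sub nm).
Qed.

(* Tangents at rationals [q] slightly to the right of [t] are nearly exact at [t]. *)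
Lemma tangent_approx_near l0 t eps : 0 < eps ->
  exists N, u t - eps <= maxaff (tangent_approx l0 N) t.
Proof.
move=> eps0; set K := slope u (t + 1) (t + 2) - lderiv u t.
set del := Num.min 1 (eps / (`|K| + 1)).
have K1 : 0 < `|K| + 1 by rewrite ltr_pwDr.
have del0 : 0 < del by rewrite lt_min ltr01 divr_gt0.
have [q] : exists q : rat, ratr q \in `]t, t + del[ by apply: rat_in_itvoo; rewrite ltrDl.
rewrite in_itv /= => /andP [tq qtdel].
exists (pickle q).+1; apply: le_trans (_ : line (tangent (ratr q)) t <= _).
  have del1 : del <= 1 by rewrite ge_min lexx.
  have delK : del * (`|K| + 1) <= eps by rewrite -ler_pdivlMr // ge_min lexx orbT.
  have qt1 : ratr q <= t + 1 by rewrite ltW // (lt_le_trans qtdel) // lerD2l.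
  have := tangent_near u_cvx tq qt1.
  have := ler_norm K; have := lerNnormlW (lexx `|K|); rewrite /line /= -/K; nra.
apply: maxaff_ge; rewrite inE map_f ?orbT //; apply: map_f.
by rewrite mem_pmap; apply/mapP; exists (pickle q); rewrite ?pickleK // mem_iota add0n ltnSn.
Qed.

Lemma tangent_approx_cvg l0 t :
  (fun n => maxaff (tangent_approx l0 n) t) @ \oo --> Num.max (line l0 t) (u t).
Proof.
apply/cvgrPdist_le => eps eps0; have [N HN] := tangent_approx_near l0 t eps0.
exists N => // n /= Nn; have le_max_n := tangent_approx_le l0 n t.
have le_n := tangent_approx_homo l0 t Nn.
have l0_le : line l0 t <= maxaff (tangent_approx l0 n) t by apply: maxaff_ge; rewrite mem_head.
by rewrite ger0_norm ?subr_ge0 // lerBlDr ge_max; apply/andP; split; lra.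
Qed.

Lemma convex_measurable : measurable_fun setT u.
Proof.
apply: (measurable_fun_cvg (h := fun n => maxaff (tangent_approx (tangent 0) n))).
  by move=> n; exact: maxaff_measurable.
by move=> t _; rewrite -[u t](max_r (line_tangent_le 0 t)); exact: tangent_approx_cvg.
Qed.

End tangent_approximation.

Section convex_order.
Context (d : measure_display) (T : measurableType d) (R : realType).
Variable P : probability T R.
Local Open Scope ereal_scope.

Lemma measurable_EFin_comp (h : R -> R) (U : T -> R) : measurable_fun setT h ->
  measurable_fun setT U -> measurable_fun setT (fun x => (h (U x))%:E).
Proof. by move=> mh mU; apply/measurable_EFinP; exact: measurableT_comp. Qed.

Lemma integral_same_law (U V : T -> R) (h : R -> R) :
  measurable_fun setT U -> measurable_fun setT V -> same_law P U V ->
  measurable_fun setT h -> (forall y, (0 <= h y)%R) ->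
  \int[P]_x (h (U x))%:E = \int[P]_x (h (V x))%:E.
Proof.
move=> mU mV UV mh h0.
have mhE : measurable_fun setT (fun y => (h y)%:E) by apply/measurable_EFinP.
have h0E : {in setT, forall y, 0 <= (h y)%:E} by move=> y _; rewrite lee_fin.
rewrite -[LHS](ge0_integral_pushforward mU _ measurableT mhE h0E) /=.
rewrite -[RHS](ge0_integral_pushforward mV _ measurableT mhE h0E) /=.
by apply: eq_measure_integral => A mA _ /=; rewrite /pushforward UV.
Qed.

Lemma integralD_ge0_comp (h1 h2 : R -> R) (U V : T -> R) :
  measurable_fun setT h1 -> measurable_fun setT h2 ->
  measurable_fun setT U -> measurable_fun setT V ->
  (forall y, (0 <= h1 y)%R) -> (forall y, (0 <= h2 y)%R) ->
  \int[P]_x ((h1 (U x))%:E + (h2 (V x))%:E) =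
  \int[P]_x (h1 (U x))%:E + \int[P]_x (h2 (V x))%:E.
Proof.
move=> mh1 mh2 mU mV h10 h20.
by apply: ge0_integralD => // [x _||x _|]; rewrite ?lee_fin //;
  exact: measurable_EFin_comp.
Qed.

Lemma cx_le_ge0 (U V : T -> R) (psi : R -> R) : cx_le P U V ->
  convex_function (E := R^o) setT psi -> (forall y, (0 <= psi y)%R) ->
  \int[P]_x (psi (U x))%:E <= \int[P]_x (psi (V x))%:E.
Proof.
have welldef_ge0 (F : T -> R) : (forall x, (0 <= F x)%R) -> expectation_welldef P F.
  move=> F0; right; rewrite (eq_integral (fun _ => 0)) ?integral0 ?ltry // => x _.
  by rewrite (max_r _) // oppr_le0.
by move=> UV psi_cvx psi0; apply: UV => //; apply: welldef_ge0 => x; exact: psi0.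
Qed.

End convex_order.

Lemma ge0_lee_sub_cross (R : realType) (pa na pb nb : \bar R) :
  (0 <= pa -> 0 <= na -> 0 <= pb -> 0 <= nb -> pb < +oo \/ nb < +oo ->
  pa + nb <= pb + na -> pa - na <= pb - nb)%E.
Proof.
case: pa => [a||] //; case: na => [a'||] //; case: pb => [b||] //; case: nb => [b'||] //=;
  rewrite ?lee_fin ?leey ?leNye // => _ _ _ _ []; rewrite ?ltxx //; lra.
Qed.

Lemma max_add_min_opp (R : realType) (y r : R) : 0 <= r ->
  Num.max y (- r) + r + Num.min (Num.max (- y) 0) r = Num.max y 0 + r.
Proof.
move=> r0; have [y0|y0] : 0 <= y \/ y <= 0 by apply/orP; exact: le_total.
  have [ry ny0] : - r <= y /\ - y <= 0 by split; lra.
  by rewrite (max_l ry) (max_r ny0) (min_l r0) (max_l y0) addr0.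
have ny0 : 0 <= - y by lra.
rewrite (max_r y0) (max_l ny0).
have [ry|yr] : - r <= y \/ y <= - r by apply/orP; exact: le_total.
  by rewrite (max_l ry) (min_l (_ : - y <= r)) ?add0r; lra.
by rewrite (max_r yr) (min_r (_ : r <= - y)) ?add0r; lra.
Qed.

Section integral_truncation.
Context (d : measure_display) (T : measurableType d) (R : realType).

Lemma integral_min_cvg (mu : {measure set T -> \bar R}) (F : T -> R) :
  measurable_fun setT F -> (forall x, 0 <= F x) ->
  (\int[mu]_x (Num.min (F x) n%:R)%:E)%E @[n --> \oo] --> (\int[mu]_x (F x)%:E)%E.
Proof.
move=> mF F0; have := @cvg_monotone_convergence _ _ _ mu _ measurableT
  (fun n x => (Num.min (F x) n%:R)%:E).
rewrite (eq_integral (fun x => (F x)%:E)) => [|x _]; first apply.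
- move=> n; apply/measurable_EFinP.
  by apply: measurable_minr => //; exact: measurable_cst.
- by move=> n x _; rewrite lee_fin le_min F0 ler0n.
- by move=> x _ n m nm; rewrite lee_fin le_min ge_min lexx ge_min ler_nat nm !orbT.
apply/cvg_lim => //; apply: cvg_near_cst; apply: filterS (nbhs_infty_ger (F x)).
by move=> n Fn; rewrite min_l.
Qed.

Lemma integral_max0 (mu : {measure set T -> \bar R}) (h : T -> R) :
  (\int[mu]_x (h x)%:E =
   \int[mu]_x (Num.max (h x) 0)%:E - \int[mu]_x (Num.max (- h x) 0)%:E)%E.
Proof.
rewrite integralE; congr (\int[mu]_x _ - \int[mu]_x _)%E; apply/funext => x.
  by rewrite funeposE EFin_max.
by rewrite funenegE EFin_max.
Qed.

Variable P : probability T R.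

Lemma integral_truncation (h : T -> R) (n : nat) : measurable_fun setT h ->
  (\int[P]_x (Num.max (h x) (- n%:R) + n%:R)%:E +
   \int[P]_x (Num.min (Num.max (- h x) 0) n%:R)%:E =
   \int[P]_x (Num.max (h x) 0)%:E + n%:R%:E)%E.
Proof.
move=> mh; have n0 : 0 <= n%:R :> R by [].
have mneg : measurable_fun setT (fun x => Num.max (- h x) 0).
  by apply: measurable_maxr; [exact: measurable_funN|exact: measurable_cst].
rewrite -ge0_integralD //; first last.
- by apply/measurable_EFinP; apply: measurable_minr => //; exact: measurable_cst.
- by move=> x _; rewrite lee_fin le_min le_max lexx orbT.
- apply/measurable_EFinP; apply: measurable_funD; last exact: measurable_cst.
  by apply: measurable_maxr => //; exact: measurable_cst.
- by move=> x _; rewrite lee_fin -lerBlDr sub0r le_max lexx orbT.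
under eq_integral do rewrite -EFinD max_add_min_opp // EFinD.
rewrite ge0_integralD //; first last.
- by apply/measurable_EFinP; apply: measurable_maxr => //; exact: measurable_cst.
- by move=> x _; rewrite lee_fin le_max lexx orbT.
by rewrite integral_cst // -[X in (_ * X)%E]/(P setT) probability_setT mule1.
Qed.

Lemma le_integral_of_truncations (a b : T -> R) :
  measurable_fun setT a -> measurable_fun setT b -> expectation_welldef P b ->
  (forall c, \int[P]_x (Num.max (a x) c - c)%:E <= \int[P]_x (Num.max (b x) c - c)%:E)%E ->
  (\int[P]_x (a x)%:E <= \int[P]_x (b x)%:E)%E.
Proof.
move=> ma mb b_wd trunc.
have ge0 h : (0 <= \int[P]_x (Num.max (h x) 0)%:E)%E.
  by apply: integral_ge0 => x _; rewrite lee_fin le_max lexx orbT.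
have neg_ge0 (h : T -> R) x : 0 <= Num.max (- h x) 0 by rewrite le_max lexx orbT.
have mneg (h : T -> R) :
    measurable_fun setT h -> measurable_fun setT (fun x => Num.max (- h x) 0).
  by move=> mh; apply: measurable_maxr; [exact: measurable_funN|exact: measurable_cst].
rewrite (integral_max0 _ a) (integral_max0 _ b).
set pa := (\int[P]_x (Num.max (a x) 0)%:E)%E; set na := (\int[P]_x (Num.max (- a x) 0)%:E)%E.
set pb := (\int[P]_x (Num.max (b x) 0)%:E)%E; set nb := (\int[P]_x (Num.max (- b x) 0)%:E)%E.
pose qa n := (\int[P]_x (Num.min (Num.max (- a x) 0) n%:R)%:E)%E.
pose qb n := (\int[P]_x (Num.min (Num.max (- b x) 0) n%:R)%:E)%E.
have qa_le n : (qa n <= na)%E.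
  apply: ge0_le_integral => // [x _|||x _]; rewrite ?lee_fin.
  - by rewrite le_min neg_ge0 ler0n.
  - by apply/measurable_EFinP; apply: measurable_minr (mneg _ ma) (measurable_cst _).
  - by apply/measurable_EFinP; exact: mneg.
  - by rewrite ge_min lexx.
have bound n : (pa + qb n <= pb + na)%E.
  have tr := trunc (- n%:R); rewrite opprK in tr.
  rewrite -(@leeD2rE _ n%:R%:E) // addeAC /pa -(integral_truncation n ma).
  apply: le_trans (leeD2r _ (leeD2r _ tr)) _.
  rewrite addeAC (integral_truncation n mb) -/pb [leRHS]addeAC.
  exact: leeD2l (qa_le n).
have cvg_qb : (pa + qb n)%E @[n --> \oo] --> (pa + nb)%E.
  have qb_cvg : qb n @[n --> \oo] --> nb by exact: integral_min_cvg (mneg _ mb) (neg_ge0 b).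
  apply: cvgeD; [|exact: cvg_cst|exact: qb_cvg].
  by rewrite ge0_adde_def // inE; [exact: ge0|exact: (ge0 (fun x => - b x))].
apply: ge0_lee_sub_cross; [exact: ge0|exact: (ge0 (fun x => - a x))|exact: ge0|
  exact: (ge0 (fun x => - b x))|exact: b_wd|].
rewrite -(cvg_lim _ cvg_qb) //; apply: lime_le; first by apply/cvg_ex; exists (pa + nb)%E.
exact: nearW.
Qed.

End integral_truncation.

Lemma ge0_integral_le_of_cvg (d : measure_display) (T : measurableType d) (R : realType)
    (mu : {measure set T -> \bar R}) (G : nat -> T -> R) (H : T -> R) (M : \bar R) :
  (forall n, measurable_fun setT (G n)) -> (forall n x, 0 <= G n x) ->
  (forall x, {homo G^~ x : n m / (n <= m)%N >-> n <= m}) ->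
  (forall x, G n x @[n --> \oo] --> (H x : R^o)) ->
  (forall n, \int[mu]_x (G n x)%:E <= M)%E -> (\int[mu]_x (H x)%:E <= M)%E.
Proof.
move=> mG G0 G_homo G_cvg GM.
rewrite (eq_integral (fun x => limn (fun n => (G n x)%:E))); last first.
  by move=> x _; apply/esym/cvg_lim => //; apply: cvg_EFin; [exact: nearW|exact: G_cvg].
rewrite monotone_convergence // => [|n|n x _|x _ n m nm]; rewrite ?lee_fin //.
- apply: lime_le; last exact: nearW.
  apply: ereal_nondecreasing_is_cvgn => n m nm.
  by apply: ge0_le_integral => // [x _|||x _]; rewrite ?lee_fin ?G_homo //;
    exact/measurable_EFinP.
- exact/measurable_EFinP.
- exact: G_homo.
Qed.

Section comonotonic_sum.
Context (d : measure_display) (T : measurableType d) (R : realType).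
Variables (P : probability T R) (X Y Z W Zco Wco : T -> R).
Hypotheses (mX : measurable_fun setT X) (mY : measurable_fun setT Y)
  (mZ : measurable_fun setT Z) (mW : measurable_fun setT W)
  (mZco : measurable_fun setT Zco) (mWco : measurable_fun setT Wco).
Hypotheses (XZ : cx_le P X Z) (YW : cx_le P Y W)
  (ZWco : comonotonic_version P Zco Wco Z W).

Lemma cx_le_sum_of_split (phi psi1 psi2 : R -> R) :
  measurable_fun setT phi -> measurable_fun setT psi1 -> measurable_fun setT psi2 ->
  (forall t, 0 <= phi t) -> (forall x, 0 <= psi1 x) -> (forall y, 0 <= psi2 y) ->
  convex_function (E := R^o) setT psi1 -> convex_function (E := R^o) setT psi2 ->
  (forall x y, phi (x + y) <= psi1 x + psi2 y) ->
  {ae P, forall w, phi (Zco w + Wco w) = psi1 (Zco w) + psi2 (Wco w)} ->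
  (\int[P]_x (phi (X x + Y x))%:E <= \int[P]_x (phi (Zco x + Wco x))%:E)%E.
Proof.
move=> mphi mpsi1 mpsi2 phi0 psi10 psi20 psi1_cvx psi2_cvx phi_le phi_co.
case: ZWco => _ law_Z law_W.
have mpsiXY : measurable_fun setT (fun x => ((psi1 (X x))%:E + (psi2 (Y x))%:E)%E).
  by apply: emeasurable_funD; exact: measurable_EFin_comp.
apply: (@le_trans _ _ (\int[P]_x ((psi1 (X x))%:E + (psi2 (Y x))%:E))%E).
  apply: ge0_le_integral => // [x _||x _]; rewrite ?lee_fin -?EFinD ?lee_fin //.
  exact: (measurable_EFin_comp (U := X \+ Y) mphi (measurable_funD mX mY)).
rewrite integralD_ge0_comp //.
apply: (@le_trans _ _ (\int[P]_x (psi1 (Z x))%:E + \int[P]_x (psi2 (W x))%:E)%E).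
  by apply: leeD; exact: cx_le_ge0.
rewrite -(integral_same_law mZco mZ law_Z mpsi1 psi10).
rewrite -(integral_same_law mWco mW law_W mpsi2 psi20).
rewrite -integralD_ge0_comp // le_eqVlt; apply/predU1P; left; apply: ae_eq_integral => //.
- by apply: emeasurable_funD; exact: measurable_EFin_comp.
- exact: (measurable_EFin_comp (U := Zco \+ Wco) mphi (measurable_funD mZco mWco)).
by apply: filterS phi_co => x /= ->; rewrite EFinD.
Qed.

Lemma cx_le_maxaff_sum (L : seq (R * R)) c : (0, c) \in L ->
  (\int[P]_x (maxaff L (X x + Y x) - c)%:E <=
   \int[P]_x (maxaff L (Zco x + Wco x) - c)%:E)%E.
Proof.
move=> cL; have L0 : L != [::] by case: L cL.
have [[S [f [g [_ f_mono g_mono Zco_fS Wco_gS]]]] _ _] := ZWco.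
have [D [D0 DL DLs]] := exists_comonotone_split f_mono g_mono L0.
have /mapP [[[k c1] c2] eD [k0 c12]] : (0, c) \in map line_sum D by rewrite DL.
have floor_le (M : seq (R * R)) m t : (0, m) \in M -> 0 <= maxaff M t - m.
  by move=> mM; rewrite subr_ge0; have := maxaff_ge t mM; rewrite /line mul0r add0r.
have mmaxaff (M : seq (R * R)) m : measurable_fun setT (fun t => maxaff M t - m).
  by apply: measurable_funB; [exact: maxaff_measurable|exact: measurable_cst].
have nil_map (h : R * R * R -> R * R) : map h D != [::].
  by rewrite -size_eq0 size_map size_eq0.
apply: cx_le_sum_of_split (mmaxaff _ _) (mmaxaff _ c1) (mmaxaff _ c2) _ _ _ _ _ _ _.
- by move=> t; exact: floor_le.
- by move=> x; apply: floor_le; rewrite k0; exact: (map_f line_fst eD).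
- by move=> y; apply: floor_le; rewrite k0; exact: (map_f line_snd eD).
- exact/convex_function_subr/maxaff_convex.
- exact/convex_function_subr/maxaff_convex.
- move=> x y; have := maxaff_sum_le x y D0.
  by rewrite (maxaff_eq_mem (nil_map _) DL) c12; lra.
apply: filterS2 Zco_fS Wco_gS => x -> ->.
by rewrite -DLs c12; lra.
Qed.

Lemma cx_le_truncated_sum (u : R -> R) c : convex_function (E := R^o) setT u ->
  (\int[P]_x (Num.max (u (X x + Y x)) c - c)%:E <=
   \int[P]_x (Num.max (u (Zco x + Wco x)) c - c)%:E)%E.
Proof.
move=> u_cvx; pose A n t := maxaff (tangent_approx u (0, c) n) t - c.
have line_c t : line (0, c) t = c by rewrite /line mul0r add0r.
have A_ge0 n t : 0 <= A n t.
  by rewrite subr_ge0 -{1}(line_c t); apply: maxaff_ge; rewrite mem_head.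
have A_le n t : A n t <= Num.max (u t) c - c.
  by rewrite lerD2r maxC -{2}(line_c t) tangent_approx_le.
have mA n : measurable_fun setT (A n).
  by apply: measurable_funB; [exact: maxaff_measurable|exact: measurable_cst].
have mu : measurable_fun setT (fun t => Num.max (u t) c - c).
  apply: measurable_funB; last exact: measurable_cst.
  by apply: measurable_maxr; [exact: convex_measurable|exact: measurable_cst].
apply: (ge0_integral_le_of_cvg (G := fun n x => A n (X x + Y x))) => [n|n x|x n m nm|x|n].
- exact: measurableT_comp (mA n) (measurable_funD mX mY).
- exact: A_ge0.
- by rewrite lerD2r tangent_approx_homo.
- by apply: cvgB (cvg_cst _); rewrite maxC -{2}(line_c (X x + Y x)); exact: tangent_approx_cvg.
apply: le_trans (cx_le_maxaff_sum (mem_head _ _)) _.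
apply: ge0_le_integral => // [x _|||x _]; rewrite ?lee_fin.
- exact: A_ge0.
- exact: measurable_EFin_comp (mA n) (measurable_funD mZco mWco).
- exact: measurable_EFin_comp mu (measurable_funD mZco mWco).
- exact: A_le.
Qed.

End comonotonic_sum.

Unset Implicit Arguments.

Theorem theorem4 (d : measure_display) (T : measurableType d) (R : realType)
  (P : probability T R) (X Y Z W Zco Wco : T -> R) :
  atomless P ->
  measurable_fun setT X -> measurable_fun setT Y ->
  measurable_fun setT Z -> measurable_fun setT W ->
  measurable_fun setT Zco -> measurable_fun setT Wco ->
  cx_le P X Z -> cx_le P Y W ->
  comonotonic_version P Zco Wco Z W ->
  cx_le P (X \+ Y) (Zco \+ Wco).
Proof.
(* [atomless P] only serves to construct a comonotonic version, which is given here. *)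
move=> _ mX mY mZ mW mZco mWco XZ YW ZWco u u_cvx _ co_wd.
have mu := convex_measurable u_cvx.
apply: le_integral_of_truncations co_wd _.
- by apply: measurableT_comp mu _; exact: measurable_funD.
- by apply: measurableT_comp mu _; exact: measurable_funD.
by move=> c; exact: (cx_le_truncated_sum mX mY mZ mW mZco mWco XZ YW ZWco c u_cvx).
Qed.
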